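(* Let a product two-action game with $m$ players be given and let $\pi\in S_m$ have exactly one fixed point. Then $EC(\pi)$ has exactly two elements, and exactly one of them is a Nash equilibrium.
   Context: Fix an integer $m\ge 1$ and $\mathcal A=\{1,\dots,m\}$. A two-action game is a finite game in normal form with player set $\mathcal A$ in which each player $i$ has exactly two pure strategies $s^i_0,s^i_1$, together with utility functions $U^i:S\to\mathbb R$, where $S=\prod_{i\in\mathcal A}\{s^i_0,s^i_1\}$. A mixed strategy combination is identified with $\underline\gamma=(\gamma^1,\dots,\gamma^m)\in[0,1]^m$, where $\gamma^i$ is the probability with which player $i$ plays $s^i_1$. The expected utility $V^i$ is the multilinear extension $V^i(\underline\gamma)=\sum_{(j_1,\dots,j_m)\in\{0,1\}^m}\prod_{k=1}^m p_k(j_k)\,U^i(s^1_{j_1},\dots,s^m_{j_m})$ with $p_k(1)=\gamma^k$, $p_k(0)=1-\gamma^k$. Write $\underline\gamma^{-i}=(\gamma^j)_{j\ne i}$ and $\lambda^i(\underline\gamma^{-i}):=V^i(\underline\gamma)|_{\gamma^i=1}-V^i(\underline\gamma)|_{\gamma^i=0}$. A Nash equilibrium is a point $\underline\gamma\in[0,1]^m$ such that for every $i$: $\lambda^i(\underline\gamma^{-i})=0$ if $0<\gamma^i<1$; $\lambda^i(\underline\gamma^{-i})\le 0$ if $\gamma^i=0$; $\lambda^i(\underline\gamma^{-i})\ge 0$ if $\gamma^i=1$. For $\underline\gamma$ put $L(\underline\gamma)=\{i:\gamma^i\in\{0,1\}\}$. A two-action game is a product two-action game if there exist $\underline v=(v_1,\dots,v_m)\in\{0,1\}^m$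 and numbers $a^i_j\in(0,1)$ for $i,j\in\mathcal A$, $i\ne j$, with $a^{i_1}_j\neq a^{i_2}_j$ whenever $i_1\neq i_2$ and both differ from $j$, such that $\lambda^i(\underline\gamma^{-i})=(-1)^{v_i}\prod_{j\in\mathcal A\setminus\{i\}}(\gamma^j-a^i_j)$ for every $i\in\mathcal A$. For $\pi\in S_m$, $F(\pi)=\{i\in\mathcal A:\pi(i)=i\}$ and $EC(\pi):=\{\underline\gamma\in[0,1]^m \mid L(\underline\gamma)=F(\pi),\ \gamma^j=a^{\pi(j)}_j \text{ for all } j\notin F(\pi)\}$. *)

From HB Require Import structures.
From mathcomp Require Import all_boot all_order all_algebra all_fingroup.
Set Implicit Arguments. Unset Strict Implicit. Unset Printing Implicit Defensive.
Import Order.TTheory GRing.Theory Num.Theory.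
Local Open Scope ring_scope.

(* Players are 'I_m. A pure strategy profile is s : {ffun 'I_m -> bool},
   s j = true meaning player j plays s^j_1, false meaning s^j_0. *)
Definition profile (m : nat) := {ffun 'I_m -> bool}.

Definition game (R : pzRingType) (m : nat) := 'I_m -> profile m -> R.

(* Mixed strategy combination: gamma j = probability that j plays s^j_1. *)
Definition mixed (R : pzRingType) (m : nat) := {ffun 'I_m -> R}.

Definition in_cube (R : realFieldType) m (g : mixed R m) :=
  forall i, 0 <= g i <= 1.

Definition V (R : comPzRingType) m (U : game R m) (i : 'I_m) (g : mixed R m) : R :=
  \sum_(s : profile m)
     (\prod_(k < m) (if s k then g k else 1 - g k)) * U i s.

Definition upd (R : pzRingType) m (g : mixed R m) (i : 'I_m) (x : R) : mixed R m :=
  [ffun j => if j == i then x else g j].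

Definition lambda (R : comPzRingType) m (U : game R m) (i : 'I_m) (g : mixed R m) : R :=
  V U i (upd g i 1) - V U i (upd g i 0).

Definition is_Nash (R : realFieldType) m (U : game R m) (g : mixed R m) : Prop :=
  in_cube g /\
  forall i,
    (0 < g i < 1 -> lambda U i g = 0) /\
    (g i = 0 -> lambda U i g <= 0) /\
    (g i = 1 -> lambda U i g >= 0).

Definition Lset (R : pzRingType) m (g : mixed R m) : {set 'I_m} :=
  [set i | (g i == 0) || (g i == 1)].

Definition Fix m (p : 'S_m) : {set 'I_m} := [set i | p i == i].

(* a i j stands for a^i_j (only meaningful for i != j). *)
Definition product_game (R : realFieldType) m (U : game R m)
    (v : 'I_m -> bool) (a : 'I_m -> 'I_m -> R) : Prop :=
  (forall i j, i != j -> 0 < a i j < 1) /\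
  (forall j i1 i2, i1 != j -> i2 != j -> i1 != i2 -> a i1 j != a i2 j) /\
  (forall i (g : mixed R m), in_cube g ->
     lambda U i g = (-1) ^+ v i * \prod_(j < m | j != i) (g j - a i j)).

Definition EC (R : realFieldType) m (a : 'I_m -> 'I_m -> R) (p : 'S_m)
    (g : mixed R m) : Prop :=
  in_cube g /\ Lset g = Fix p /\
  (forall j, j \notin Fix p -> g j = a (p j) j).

From HB Require Import structures.
From mathcomp Require Import all_boot all_order all_algebra all_fingroup.
Import Order.TTheory GRing.Theory Num.Theory.
Local Open Scope ring_scope.

(* Let f be the fixed point of p.  EC(p) consists of the two profiles with
   gamma^j = a^{p(j)}_j for j <> f and gamma^f in {0, 1}.  At both of them every
   player j <> f is indifferent: the factor of lambda^j indexed by p^-1(j) vanishes.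
   Player f faces the same nonzero gain
   c = (-1)^{v_f} prod_{j <> f} (a^{p(j)}_j - a^f_j) at both profiles
   (p(j) differs from j and from f, so each factor is nonzero), hence exactly one
   of them is an equilibrium, according to the sign of c. *)

Set Implicit Arguments.
Unset Strict Implicit.
Unset Printing Implicit Defensive.

Lemma is_Nash_indifferent (R : realFieldType) m (U : game R m)
    (g : mixed R m) (f : 'I_m) :
  in_cube g -> (forall i, i != f -> lambda U i g = 0) -> g f = 0 \/ g f = 1 ->
  is_Nash U g <-> (g f = 0 -> lambda U f g <= 0) /\ (g f = 1 -> 0 <= lambda U f g).
Proof.
move=> cube_g indiff pure_f; split; first by case=> _ /(_ f) [].
move=> [h0 h1]; split=> // i; case: (eqVneq i f) => [->|/indiff ->].
  split=> //; case: pure_f => ->; by rewrite ltxx ?andbF.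
by rewrite lexx.
Qed.

Section OneFixedPoint.

Variables (R : realFieldType) (m : nat) (U : game R m).
Variables (v : 'I_m -> bool) (a : 'I_m -> 'I_m -> R) (p : 'S_m) (f : 'I_m).

Hypothesis a_in01 : forall i j, i != j -> 0 < a i j < 1.
Hypothesis a_inj : forall j i1 i2, i1 != j -> i2 != j -> i1 != i2 -> a i1 j != a i2 j.
Hypothesis lambda_prod : forall i (g : mixed R m), in_cube g ->
  lambda U i g = (-1) ^+ v i * \prod_(j < m | j != i) (g j - a i j).
Hypothesis Fix_p : Fix p = [set f].

Lemma in_Fix j : (j \in Fix p) = (j == f).
Proof. by rewrite Fix_p in_set1. Qed.

Lemma perm_fixE j : (p j == j) = (j == f).
Proof. by rewrite -in_Fix inE. Qed.

Lemma perm_fix : p f = f.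
Proof. by apply/eqP; rewrite perm_fixE. Qed.

Lemma a_perm_in01 j : j != f -> 0 < a (p j) j < 1.
Proof. by move=> jf; apply: a_in01; rewrite perm_fixE. Qed.

Definition ec_point (b : R) : mixed R m :=
  [ffun j => if j == f then b else a (p j) j].

Lemma ec_pointE b j : ec_point b j = if j == f then b else a (p j) j.
Proof. by rewrite ffunE. Qed.

Lemma ec_point_fix b : ec_point b f = b.
Proof. by rewrite ec_pointE eqxx. Qed.

Lemma ec_point_inj : injective ec_point.
Proof. by move=> b b' /(congr1 (fun g : mixed R m => g f)); rewrite !ec_point_fix. Qed.

Lemma ec_point_in_cube b : 0 <= b <= 1 -> in_cube (ec_point b).
Proof.
move=> b01 j; rewrite ec_pointE; case: eqVneq => // /a_perm_in01 /andP[a0 a1].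
by rewrite !ltW.
Qed.

Lemma ec_pointP (g : mixed R m) :
  EC a p g <-> g = ec_point 0 \/ g = ec_point 1.
Proof.
split.
  case=> _ [L_g off_f].
  have : f \in Lset g by rewrite L_g in_Fix.
  rewrite inE => /orP[] /eqP gf; [left|right]; apply/ffunP => j;
    rewrite ec_pointE; case: eqVneq => [->//|jf]; by apply: off_f; rewrite in_Fix.
have cube01 b : (b == 0) || (b == 1) -> in_cube (ec_point b).
  by case/orP => /eqP ->; apply: ec_point_in_cube; rewrite lexx ler01.
have EC01 b : (b == 0) || (b == 1) -> EC a p (ec_point b).
  move=> b01; split; first exact: cube01.
  split; last by move=> j; rewrite in_Fix ec_pointE => /negbTE ->.
  apply/setP => j; rewrite !inE perm_fixE ec_pointE.
  case: (eqVneq j f) => [//|/a_perm_in01 /andP[a0 a1]].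
  by rewrite gt_eqF // lt_eqF.
by case=> ->; apply: EC01; rewrite eqxx ?orbT.
Qed.

Definition fix_gain : R := (-1) ^+ v f * \prod_(j < m | j != f) (a (p j) j - a f j).

Lemma fix_gain_neq0 : fix_gain != 0.
Proof.
rewrite mulf_eq0 negb_or signr_eq0 /=; apply/prodf_neq0 => j jf.
rewrite subr_eq0 a_inj ?perm_fixE //; first by rewrite eq_sym.
by rewrite -{1}perm_fix (inj_eq perm_inj).
Qed.

Lemma lambda_ec_point_fix b : 0 <= b <= 1 -> lambda U f (ec_point b) = fix_gain.
Proof.
move=> b01; rewrite lambda_prod; last exact: ec_point_in_cube.
congr (_ * _).
by apply: eq_bigr => j jf; rewrite ec_pointE (negbTE jf).
Qed.

Lemma lambda_ec_point_indiff b j :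
  0 <= b <= 1 -> j != f -> lambda U j (ec_point b) = 0.
Proof.
move=> b01 jf; rewrite lambda_prod; last exact: ec_point_in_cube.
pose k := (p^-1)%g j.
have pk : p k = j by rewrite permKV.
have kj : k != j by apply: contra jf => /eqP kj; rewrite -perm_fixE -{1}kj pk.
have kf : k != f by apply: contra jf => /eqP kf; rewrite -pk kf perm_fix.
by rewrite (bigD1 k kj) /= ec_pointE (negbTE kf) pk subrr mul0r mulr0.
Qed.

Lemma is_Nash_ec_point b : b = 0 \/ b = 1 ->
  is_Nash U (ec_point b) <-> (b = 0 -> fix_gain <= 0) /\ (b = 1 -> 0 <= fix_gain).
Proof.
move=> b01; have b_in01 : 0 <= b <= 1 by case: b01 => ->; rewrite lexx ler01.
have indiff i : i != f -> lambda U i (ec_point b) = 0.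
  exact: lambda_ec_point_indiff.
have pure_f : ec_point b f = 0 \/ ec_point b f = 1 by rewrite ec_point_fix.
have := is_Nash_indifferent (ec_point_in_cube b_in01) indiff pure_f.
by rewrite ec_point_fix lambda_ec_point_fix.
Qed.

Lemma is_Nash_ec_point0 : is_Nash U (ec_point 0) <-> fix_gain <= 0.
Proof.
apply: iff_trans (is_Nash_ec_point (or_introl erefl)) _.
by split=> [[->]//|g_le0]; split=> // /eqP; rewrite eq_sym oner_eq0.
Qed.

Lemma is_Nash_ec_point1 : is_Nash U (ec_point 1) <-> 0 <= fix_gain.
Proof.
apply: iff_trans (is_Nash_ec_point (or_intror erefl)) _.
by split=> [[_ ->]//|g_ge0]; split=> // /eqP; rewrite oner_eq0.
Qed.

End OneFixedPoint.

Theorem theorem3p7 (R : realFieldType) (m : nat) (U : game R m)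
    (v : 'I_m -> bool) (a : 'I_m -> 'I_m -> R) (p : 'S_m) :
  product_game U v a ->
  #|Fix p| = 1%N ->
  exists g1 g2 : mixed R m,
    g1 <> g2 /\
    (forall g : mixed R m, EC a p g <-> (g = g1 \/ g = g2)) /\
    ((is_Nash U g1 /\ ~ is_Nash U g2) \/ (~ is_Nash U g1 /\ is_Nash U g2)).
Proof.
move=> [a_in01 [a_inj lambda_prod]] /eqP /cards1P [f Fix_p].
exists (ec_point a p f 0), (ec_point a p f 1); split.
  by move/ec_point_inj/eqP; rewrite eq_sym oner_eq0.
split; first exact: ec_pointP a_in01 Fix_p.
have [Nash0 Nash1] := (is_Nash_ec_point0 a_in01 lambda_prod Fix_p,
                       is_Nash_ec_point1 a_in01 lambda_prod Fix_p).
have := fix_gain_neq0 v a_inj Fix_p.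
case: ltgtP => // gain _; [left|right]; split.
- exact/Nash0/ltW.
- by move/Nash1; rewrite leNgt gain.
- by move/Nash0; rewrite leNgt gain.
- exact/Nash1/ltW.
Qed.
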